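(* Let $k\ge1$, let $(x_{i+1/2})_{i\in\mathbb{Z}}$ be an arbitrary mesh and $(\bar v_i)_{i\in\mathbb{Z}}$ an arbitrary real sequence, and let $s_i$ and $v^\pm_{i+1/2}$ be the ENO stencil indices and cell interface values of the $k$th order ENO reconstruction. Then $s_i\le s_{i+1}$ for all $i$, and $$v^+_{i+1/2}-v^-_{i+1/2}=\sum_{s=s_i}^{s_{i+1}-1}[\bar v_s,\dots,\bar v_{s+k}]\,X_{i,s},\qquad X_{i,s}=(x_{s+k+1/2}-x_{s-1/2})\prod_{\substack{m=0\\ m\neq i-s}}^{k-1}(x_{i+1/2}-x_{s+m+1/2}),$$ where the sum is empty (equal to $0$) when $s_i=s_{i+1}$.
   Context: Mesh: a strictly increasing sequence $(x_{i+1/2})_{i\in\mathbb{Z}}$ of reals with $x_{i+1/2}\to\pm\infty$ as $i\to\pm\infty$; cells $I_i=[x_{i-1/2},x_{i+1/2})$ with lengths $\Delta x_i=x_{i+1/2}-x_{i-1/2}$. Given a real sequence $(\bar v_i)_{i\in\mathbb{Z}}$, the divided differences are defined by $[\bar v_i]=\bar v_i$ and, for $i<j$, $[\bar v_i,\dots,\bar v_j]=\frac{[\bar v_{i+1},\dots,\bar v_j]-[\bar v_i,\dots,\bar v_{j-1}]}{x_{j+1/2}-x_{i-1/2}}$. The $k$th order ENO reconstruction: for each $i$, set $s_i^1=i$, and for $\ell=1,\dots,k-1$ set $s_i^{\ell+1}=s_i^\ell-1$ if $\bigl|[\bar v_{s_i^\ell-1},\dots,\bar v_{s_i^\ell+\ell-1}]\bigr|<\bigl|[\bar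 v_{s_i^\ell},\dots,\bar v_{s_i^\ell+\ell}]\bigr|$, and $s_i^{\ell+1}=s_i^\ell$ otherwise; put $s_i=s_i^k\in\{i-k+1,\dots,i\}$. Then $p_i$ is the unique polynomial of degree at most $k-1$ with $\frac{1}{\Delta x_j}\int_{I_j}p_i(x)\,dx=\bar v_j$ for $j=s_i,\dots,s_i+k-1$. The cell interface values are $v^-_{i+1/2}=p_i(x_{i+1/2})$ and $v^+_{i+1/2}=p_{i+1}(x_{i+1/2})$. *)

(* The mesh and data take values in an arbitrary real field R
   (the paper's setting is R = the reals; the statement is purely algebraic). *)
From HB Require Import structures.
From mathcomp Require Import all_boot all_order all_algebra.
Set Implicit Arguments. Unset Strict Implicit. Unset Printing Implicit Defensive.
Import Order.TTheory GRing.Theory Num.Theory.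
Local Open Scope ring_scope.

Section ENO.
Variable R : realFieldType.

(* Mesh: x i stands for x_{i+1/2}; cell I_i = [x (i-1), x i). *)
Definition strictly_increasing_mesh (x : int -> R) : Prop :=
  forall i : int, x i < x (i + 1).

Definition mesh_unbounded (x : int -> R) : Prop :=
  (forall M : R, exists N : int, forall i : int, N <= i -> M < x i) /\
  (forall M : R, exists N : int, forall i : int, i <= N -> x i < M).

(* dd x v i n = [v_i, ..., v_{i+n}] *)
Fixpoint dd (x : int -> R) (v : int -> R) (i : int) (n : nat) : R :=
  match n with
  | 0%N => v i
  | n'.+1 => (dd x v (i + 1) n' - dd x v i n') / (x (i + n'.+1%:Z) - x (i - 1))
  end.

(* eno_st x v i n = s_i^{n+1} *)
Fixpoint eno_st (x v : int -> R) (i : int) (n : nat) : int :=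
  match n with
  | 0%N => i
  | n'.+1 => let s := eno_st x v i n' in
             if `|dd x v (s - 1) n'.+1| < `|dd x v s n'.+1| then s - 1 else s
  end.

Definition eno_stencil (k : nat) (x v : int -> R) (i : int) : int :=
  eno_st x v i k.-1.

Definition poly_prim (p : {poly R}) : {poly R} :=
  \poly_(j < (size p).+1) (if j is j'.+1 then p`_j' / j'.+1%:R else 0).

Definition cell_avg (x : int -> R) (p : {poly R}) (j : int) : R :=
  ((poly_prim p).[x j] - (poly_prim p).[x (j - 1)]) / (x j - x (j - 1)).

Definition is_eno_poly (k : nat) (x v : int -> R) (i : int) (p : {poly R}) : Prop :=
  (size p <= k)%N /\
  forall j : int, eno_stencil k x v i <= j <= eno_stencil k x v i + k%:Z - 1 ->
    cell_avg x p j = v j.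

Definition Xcoef (k : nat) (x : int -> R) (i s : int) : R :=
  (x (s + k%:Z) - x (s - 1)) *
  \prod_(m < k | m%:Z != i - s) (x i - x (s + m%:Z)).

End ENO.

From HB Require Import structures.
From mathcomp Require Import all_boot all_order all_algebra.
From mathcomp Require Import zify ring lra.
Set Implicit Arguments. Unset Strict Implicit. Unset Printing Implicit Defensive.
Import Order.TTheory GRing.Theory Num.Theory.
Local Open Scope ring_scope.

(* Let V be a primitive of the cell data, V_j - V_{j-1} = v_j (x_{j+1/2} - x_{j-1/2}).
   A polynomial of degree < k has cell averages v_j on k consecutive cells iff its
   antiderivative interpolates V (up to a constant) at the k+1 bounding interfaces; so
   p_i = P_{s_i}', where P_s interpolates V at x_{s-1/2}, ..., x_{s+k-1/2}, and
   [v_s, ..., v_{s+k}] is the leading coefficient of the interpolant of V at the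
   k+2 nodes x_{s-1/2}, ..., x_{s+k+1/2}.
   Two interpolants on node sets shifted by one differ by a multiple of the nodal
   polynomial of their k common nodes, whose derivative at a node is a product of
   node differences.  Since each ENO step moves the stencil by at most one cell,
   s_i <= s_{i+1} and x_{i+1/2} is a common node of all shifted node sets between the
   two stencils; telescoping over them gives the formula. *)

Section Mesh.
Variable R : realFieldType.
Variable x : int -> R.
Hypothesis x_incr : strictly_increasing_mesh x.

Lemma mesh_lt_addS (a : int) (n : nat) : x a < x (a + n.+1%:Z).
Proof.
elim: n => [|n IH]; first exact: x_incr.
apply: (lt_trans IH); have -> : a + n.+2%:Z = a + n.+1%:Z + 1 by lia.
exact: x_incr.
Qed.

Lemma mesh_lt (a b : int) : a < b -> x a < x b.
Proof.
move=> ab; have -> : b = a + (absz (b - a - 1)%R).+1%:Z by lia.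
exact: mesh_lt_addS.
Qed.

Lemma mesh_inj : injective x.
Proof.
by move=> a b eab; case: (ltgtP a b) => // /mesh_lt; rewrite eab ltxx.
Qed.

Lemma mesh_sub_neq0 (a b : int) : a < b -> x b - x a != 0.
Proof. by move=> /mesh_lt ab; rewrite subr_eq0 gt_eqF. Qed.

Lemma uniq_mesh_nodes (a : int) (n : nat) : uniq [seq x (a + t%:Z) | t <- iota 0 n].
Proof. by rewrite map_inj_uniq ?iota_uniq // => t1 t2 /mesh_inj; lia. Qed.

End Mesh.

Lemma poly_eq0_roots (R : idomainType) (q : {poly R}) (rs : seq R) :
  (size q <= size rs)%N -> all (root q) rs -> uniq rs -> q = 0.
Proof.
move=> sq rq urs; apply/eqP/negPn/negP => q0.
by have := max_poly_roots q0 rq urs; rewrite ltnNge sq.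
Qed.

Lemma coefXsubCM_last (R : nzRingType) (c : R) (p : {poly R}) (n : nat) :
  (size p <= n.+1)%N -> (('X - c%:P) * p)`_n.+1 = p`_n.
Proof.
move=> sp; rewrite mulrBl coefB coefXM coefCM /=.
by rewrite (nth_default _ sp) mulr0 subr0.
Qed.

Lemma deriv_prod_XsubC_at (R : comNzRingType) (n : nat) (f : 'I_n -> R) (m0 : 'I_n) :
  (\prod_(t < n) ('X - (f t)%:P))^`().[f m0] = \prod_(t < n | t != m0) (f m0 - f t).
Proof.
rewrite (bigD1 m0) //= derivM derivXsubC mul1r hornerD hornerM hornerXsubC.
rewrite subrr mul0r addr0 horner_prod; apply: eq_bigr => t _.
by rewrite hornerXsubC.
Qed.

Lemma deriv_poly_prim (R : realFieldType) (p : {poly R}) : (poly_prim p)^`() = p.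
Proof.
apply/polyP => j; rewrite coef_deriv coef_poly ltnS.
case: ltnP => hj; last by rewrite (nth_default _ hj) -mulr_natr mul0r.
have nz : (j.+1%:R : R) != 0 by rewrite pnatr_eq0.
by rewrite -mulrnAr -mulr_natl mulfV // mulr1.
Qed.

Section Neville.
Variable R : realFieldType.
Variables x V : int -> R.
Hypothesis x_incr : strictly_increasing_mesh x.

(* The interpolant of V at the nodes x a, ..., x (a + n), by Neville's recursion. *)
Fixpoint neville (a : int) (n : nat) : {poly R} :=
  match n with
  | 0%N => (V a)%:P
  | n'.+1 => (x (a + n'.+1%:Z) - x a)^-1 *:
      (('X - (x a)%:P) * neville (a + 1) n' - ('X - (x (a + n'.+1%:Z))%:P) * neville a n')
  end.

Definition neville_lead (a : int) (n : nat) : R := (neville a n)`_n.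

Lemma size_neville (a : int) (n : nat) : (size (neville a n) <= n.+1)%N.
Proof.
elim: n a => [|n IH] a /=; first exact: size_polyC_leq1.
apply: leq_trans (size_scale_leq _ _) _.
apply: leq_trans (size_polyD _ _) _; rewrite size_polyN geq_max.
by apply/andP; split; apply: leq_trans (size_polyMleq _ _) _; rewrite size_XsubC /=; exact: IH.
Qed.

Lemma neville_interp (a : int) (n j : nat) :
  (j <= n)%N -> (neville a n).[x (a + j%:Z)] = V (a + j%:Z).
Proof.
elim: n a j => [|n IH] a j /=.
  by rewrite leqn0 => /eqP ->; rewrite hornerC addr0.
move=> jn; have d0 : x (a + n.+1%:Z) - x a != 0 by apply: (mesh_sub_neq0 x_incr); lia.
rewrite hornerZ hornerD hornerN !hornerM !hornerXsubC.
case: j jn => [|j] jn.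
  have := IH a 0%N (leq0n n); rewrite !addr0 => ->.
  rewrite subrr mul0r add0r -mulNr opprB.
  by rewrite mulrA mulVf ?mul1r.
have -> : (neville (a + 1) n).[x (a + j.+1%:Z)] = V (a + j.+1%:Z).
  have -> : a + j.+1%:Z = a + 1 + j%:Z by lia.
  exact: IH.
case: (ltngtP j n) => [jlt | jgt | ->].
- rewrite IH // -mulrBl.
  have -> : x (a + j.+1%:Z) - x a - (x (a + j.+1%:Z) - x (a + n.+1%:Z)) =
            x (a + n.+1%:Z) - x a by ring.
  by rewrite mulrA mulVf // mul1r.
- by move: jn; rewrite ltnS leqNgt jgt.
- by rewrite subrr mul0r subr0 mulrA mulVf // mul1r.
Qed.

Lemma neville_lead_rec (a : int) (n : nat) :
  neville_lead a n.+1 =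
    (neville_lead (a + 1) n - neville_lead a n) / (x (a + n.+1%:Z) - x a).
Proof.
by rewrite /neville_lead /= coefZ coefB !coefXsubCM_last ?size_neville // mulrC.
Qed.

(* Both interpolants agree at the n common nodes and the difference has degree <= n. *)
Lemma neville_shift_sub (a : int) (n : nat) :
  neville (a + 1) n - neville a n =
  (neville_lead (a + 1) n - neville_lead a n) *:
    \prod_(t < n) ('X - (x (a + 1 + t%:Z))%:P).
Proof.
set q := neville (a + 1) n - neville a n.
set rs := [seq x (a + 1 + t%:Z) | t <- iota 0 n].
have size_rs : size rs = n by rewrite size_map size_iota.
have rs_roots : all (root q) rs.
  apply/allP => z /mapP [t]; rewrite mem_iota add0n => /andP [_ tn] ->.
  rewrite /root /q hornerD hornerN neville_interp ?(ltnW tn) //.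
  have -> : a + 1 + t%:Z = a + t.+1%:Z by lia.
  by rewrite neville_interp // subrr.
have uniq_rs : uniq rs by apply: uniq_mesh_nodes.
have size_q : (size q <= n.+1)%N.
  by apply: leq_trans (size_polyD _ _) _; rewrite size_polyN geq_max !size_neville.
have lead_q : q`_n = neville_lead (a + 1) n - neville_lead a n by rewrite coefB.
case: (ltngtP (size q) n.+1) => [q_small | q_big | q_size].
- have q0 : q = 0 by apply: (poly_eq0_roots _ rs_roots uniq_rs); rewrite size_rs -ltnS.
  by rewrite -lead_q q0 coef0 scale0r.
- by move: size_q; rewrite leqNgt q_big.
- rewrite {1}(all_roots_prod_XsubC _ rs_roots) ?size_rs ?uniq_rootsE //.
  rewrite /lead_coef q_size /= lead_q big_map.
  by rewrite -(subn0 n) -/(index_iota 0 n) big_mkord subn0.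
Qed.

Lemma deriv_neville_shift_sub_at (a i : int) (k : nat) :
  a < i <= a + k%:Z ->
  (neville (a + 1) k - neville a k)^`().[x i] =
    neville_lead a k.+1 * Xcoef k x i (a + 1).
Proof.
move=> hi; have dk : x (a + k.+1%:Z) - x a != 0 by apply: (mesh_sub_neq0 x_incr); lia.
rewrite /Xcoef; have -> : a + 1 + k%:Z = a + k.+1%:Z by lia.
rewrite neville_shift_sub derivZ hornerZ neville_lead_rec addrK mulrA divfK //.
congr (_ * _).
have m0_lt : (absz (i - (a + 1))%R < k)%N by lia.
pose f (m : 'I_k) := x (a + 1 + m%:Z).
have -> : x i = f (Ordinal m0_lt) by rewrite /f /=; congr x; lia.
rewrite (deriv_prod_XsubC_at f); apply: eq_bigl => m /=.
apply/idP/idP => /eqP ne; apply/eqP => eq; apply: ne.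
  by apply: val_inj => /=; lia.
by move: eq => /(congr1 val) /= ->; lia.
Qed.

End Neville.

Section ENOStencil.
Variable R : realFieldType.
Variables x v : int -> R.

Lemma eno_st_bounds (i : int) (n : nat) : i - n%:Z <= eno_st x v i n <= i.
Proof. by elim: n => [|n IH] /=; [lia | case: ifP => _; lia]. Qed.

(* Each step moves the stencil left by at most one, so the stencils of i and i + 1 can
   only cross if they were equal one step earlier, and then they move alike. *)
Lemma eno_st_mono (i : int) (n : nat) : eno_st x v i n <= eno_st x v (i + 1) n.
Proof.
elim: n => [|n IH] /=; first by lia.
have := eno_st_bounds i n; have := eno_st_bounds (i + 1) n.
case: (eqVneq (eno_st x v i n) (eno_st x v (i + 1) n)) => [-> | neq].
  by case: ifP => _; lia.
by case: ifP => _; case: ifP => _; lia.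
Qed.

End ENOStencil.

Section ENOReconstruction.
Variable R : realFieldType.
Variables x v V : int -> R.
Hypothesis x_incr : strictly_increasing_mesh x.
Hypothesis V_prim : forall j, V j - V (j - 1) = v j * (x j - x (j - 1)).

Lemma cell_sub_neq0 (j : int) : x j - x (j - 1) != 0.
Proof. by apply: (mesh_sub_neq0 x_incr); lia. Qed.

Lemma dd_neville_lead (i : int) (n : nat) :
  dd x v i n = neville_lead x V (i - 1) n.+1.
Proof.
elim: n i => [|n IH] i.
  by rewrite neville_lead_rec /neville_lead /= !coefC subrK V_prim mulfK ?cell_sub_neq0.
rewrite neville_lead_rec /= !IH addrK subrK.
by have -> : i - 1 + n.+2%:Z = i + n.+1%:Z by lia.
Qed.

Lemma cell_avg_eq_neville (k : nat) (p : {poly R}) (s : int) :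
  (size p <= k)%N ->
  (forall j, s <= j <= s + k%:Z - 1 -> cell_avg x p j = v j) ->
  p = (neville x V (s - 1) k)^`().
Proof.
move=> size_p avg_p.
set P := poly_prim p.
set Q := P - (P.[x (s - 1)] - V (s - 1))%:P.
have Q_interp j : (j <= k)%N -> Q.[x (s - 1 + j%:Z)] = V (s - 1 + j%:Z).
  elim: j => [|j IH] jk; first by rewrite addr0 /Q hornerD hornerN hornerC; ring.
  have avg_j := avg_p (s - 1 + j.+1%:Z) ltac:(lia).
  have Vj := V_prim (s - 1 + j.+1%:Z).
  have dj := cell_sub_neq0 (s - 1 + j.+1%:Z).
  have e : s - 1 + j.+1%:Z - 1 = s - 1 + j%:Z by lia.
  rewrite /cell_avg -/P e in avg_j; rewrite e in Vj dj.
  have jump : P.[x (s - 1 + j.+1%:Z)] - P.[x (s - 1 + j%:Z)] =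
              V (s - 1 + j.+1%:Z) - V (s - 1 + j%:Z) by rewrite Vj -avg_j mulfVK.
  move: (IH (ltnW jk)); rewrite /Q !hornerD !hornerN !hornerC; lra.
have -> : p = Q^`() by rewrite /Q derivB derivC subr0 deriv_poly_prim.
congr deriv; apply/eqP; rewrite -subr_eq0; apply/eqP.
apply: (poly_eq0_roots (rs := [seq x (s - 1 + t%:Z) | t <- iota 0 k.+1])).
- rewrite size_map size_iota.
  apply: leq_trans (size_polyD _ _) _; rewrite size_polyN geq_max size_neville andbT.
  apply: leq_trans (size_polyD _ _) _; rewrite size_polyN geq_max.
  rewrite (leq_trans (size_poly _ _)) ?ltnS //=.
  exact: leq_trans (size_polyC_leq1 _) _.
- apply/allP => z /mapP [t]; rewrite mem_iota add0n ltnS => /andP [_ tk] ->.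
  by rewrite /root hornerD hornerN Q_interp // neville_interp // subrr.
- exact: uniq_mesh_nodes.
Qed.

Lemma deriv_neville_sub_at (k : nat) (s s' i : int) :
  s <= s' -> i - k%:Z < s -> s' <= i + 1 ->
  (neville x V (s' - 1) k - neville x V (s - 1) k)^`().[x i] =
    \sum_(0 <= t < absz (s' - s)) dd x v (s + t%:Z) k * Xcoef k x i (s + t%:Z).
Proof.
move=> ss' lo hi.
have -> : neville x V (s' - 1) k - neville x V (s - 1) k =
    \sum_(0 <= t < absz (s' - s))
      (neville x V (s - 1 + t.+1%:Z) k - neville x V (s - 1 + t%:Z) k).
  rewrite (telescope_sumr (fun t => neville x V (s - 1 + t%:Z) k)) // addr0.
  by have -> : s - 1 + (absz (s' - s))%:Z = s' - 1 by lia.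
rewrite raddf_sum horner_sum; apply: eq_big_nat => t /andP [_ tN].
have -> : s - 1 + t.+1%:Z = s - 1 + t%:Z + 1 by lia.
rewrite deriv_neville_shift_sub_at //; last by lia.
rewrite dd_neville_lead; congr (neville_lead _ _ _ _ * Xcoef _ _ _ _); lia.
Qed.

End ENOReconstruction.

Definition cell_primitive (R : zmodType) (w : int -> R) (j : int) : R :=
  match j with
  | Posz n => \sum_(t < n) w t.+1%:Z
  | Negz n => - \sum_(t < n.+1) w (- t%:Z)
  end.

Lemma cell_primitive_sub (R : zmodType) (w : int -> R) (j : int) :
  cell_primitive w j - cell_primitive w (j - 1) = w j.
Proof.
case: j => [[|n]|n].
- by rewrite /= big_ord0 big_ord1 oppr0 sub0r opprK.
- have -> : Posz n.+1 - 1 = Posz n by lia.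
  by rewrite /= big_ord_recr /= addrAC subrr add0r.
- have -> : Negz n - 1 = Negz n.+1 by rewrite !NegzE; lia.
  by rewrite /= opprK (big_ord_recr n.+1) /= addKr NegzE.
Qed.

Theorem mainTheorem2 (R : realFieldType) (k : nat) (x v : int -> R)
    (p : int -> {poly R}) :
  (1 <= k)%N ->
  strictly_increasing_mesh x ->
  mesh_unbounded x ->
  (forall i : int, is_eno_poly k x v i (p i)) ->
  forall i : int,
    eno_stencil k x v i <= eno_stencil k x v (i + 1) /\
    (p (i + 1)).[x i] - (p i).[x i] =
      \sum_(0 <= t < absz (eno_stencil k x v (i + 1) - eno_stencil k x v i))
        dd x v (eno_stencil k x v i + t%:Z) k *
        Xcoef k x i (eno_stencil k x v i + t%:Z).
Proof.
move=> k_gt0 x_incr _ p_eno i.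
pose V := cell_primitive (fun j => v j * (x j - x (j - 1))).
have V_prim j : V j - V (j - 1) = v j * (x j - x (j - 1)) by apply: cell_primitive_sub.
have p_neville j : p j = (neville x V (eno_stencil k x v j - 1) k)^`().
  by case: (p_eno j) => size_p avg_p; apply: cell_avg_eq_neville.
have mono : eno_stencil k x v i <= eno_stencil k x v (i + 1) by apply: eno_st_mono.
split => //.
rewrite !p_neville -hornerN -hornerD -derivB (deriv_neville_sub_at x_incr V_prim) //.
- by have := eno_st_bounds x v i k.-1; rewrite /eno_stencil; lia.
- by have := eno_st_bounds x v (i + 1) k.-1; rewrite /eno_stencil; lia.
Qed.
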